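(* Let $N\geq 1$ and let $X=(X_1,\dots,X_N)$ be a random vector in $\{-1,1\}^N$ with unit covariance $\rho=\rho^X$, $\rho_{i,j}=\mathbf{E}[X_iX_j]$. (i) The matrix $\rho$ is singular if and only if there exist real deterministic coefficients $\lambda_1,\dots,\lambda_N$, not all zero, such that $\sum_k\lambda_kX_k=0$ almost surely. (ii) If $\rho$ is singular, then $\pi(\rho)$ lies on the boundary of $\mathcal{U}_N^*$ in $\mathscr{F}_N^*$.
   Context: $\mathcal{U}_N$ is the set of all matrices $\rho^X$ for random vectors $X\in\{-1,1\}^N$ (unit covariances). $\mathscr{F}_N^*$ is the space of real arrays indexed by pairs $1\le i<j\le N$, $\pi(\rho)=(\rho_{i,j})_{i<j}$, and $\mathcal{U}_N^*=\pi(\mathcal{U}_N)$. *)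

From HB Require Import structures.
From mathcomp Require Import all_boot all_order all_algebra.
From mathcomp Require Import all_classical all_reals all_analysis.
Set Implicit Arguments. Unset Strict Implicit. Unset Printing Implicit Defensive.
Import Order.TTheory GRing.Theory Num.Theory numFieldNormedType.Exports.
Local Open Scope ring_scope.

(* The sign cube {-1,1}^N : a point is encoded by x : {ffun 'I_N -> bool},
   coordinate i being +1 if x i = true and -1 otherwise. *)
Definition cube (N : nat) := {ffun 'I_N -> bool}.
Definition sgn {R : pzRingType} (b : bool) : R := if b then 1 else -1.

(* The law of a random vector X in {-1,1}^N: a probability mass function
   on the (finite) cube.  X is determined (in law) by p, and
   E[f(X)] = \sum_x p x * f x. *)
Definition is_law {R : realType} (N : nat) (p : {ffun cube N -> R}) : Prop :=
  (forall x, 0 <= p x) /\ \sum_x p x = 1.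

Definition rho_of {R : realType} (N : nat) (p : {ffun cube N -> R}) : 'M[R]_N :=
  \matrix_(i, j) \sum_x p x * (sgn (x i) * sgn (x j)).

(* "sum_k lambda_k X_k = 0 almost surely": the relation holds at every
   point of the cube charged by the law. *)
Definition as_lin_rel {R : realType} (N : nat) (p : {ffun cube N -> R})
  (lam : 'I_N -> R) : Prop :=
  forall x : cube N, 0 < p x -> \sum_k lam k * sgn (x k) = 0.

Definition U_set {R : realType} (N : nat) : set 'M[R]_N :=
  [set r | exists p : {ffun cube N -> R}, is_law p /\ r = rho_of p].

Definition pairs (N : nat) := {ij : 'I_N * 'I_N | (ij.1 < ij.2)%N}.

(* F_N^* : real arrays indexed by pairs i<j, with the product (= Euclidean)
   topology. *)
Definition RT (R : realType) : topologicalType := R.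
Notation Fstar R N := (@prod_topology (pairs N) (fun _ => Topological.sort (RT R))).

Definition piF {R : realType} (N : nat) (r : 'M[R]_N) : Fstar R N :=
  fun ij => r (val ij).1 (val ij).2.

Definition Ustar {R : realType} (N : nat) : set (Fstar R N) :=
  [set piF r | r in @U_set R N].

Definition boundary {T : topologicalType} (A : set T) : set T :=
  closure A `\` interior A.

From HB Require Import structures.
From mathcomp Require Import all_boot all_order all_algebra.
From mathcomp Require Import all_classical all_reals all_analysis.
From mathcomp Require Import ring lra.
Import Order.TTheory GRing.Theory Num.Theory numFieldNormedType.Exports.
Local Open Scope ring_scope.
Local Open Scope classical_set_scope.

(* For any weights lam, lam^T rho lam = E[(\sum_k lam_k X_k)^2].  Since rho is
   positive semidefinite, lam is in its kernel exactly when this expectation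
   vanishes, i.e. when \sum_k lam_k X_k = 0 almost surely.
   For a symmetric matrix with unit diagonal, lam^T r lam is an affine function
   of the off-diagonal entries pi(r); it is nonnegative on U_N^* and vanishes at
   pi(rho).  A nontrivial relation between +-1 variables has two nonzero
   coefficients lam_i, lam_j, and moving the (i,j) coordinate of pi(rho)
   against the sign of lam_i lam_j makes the form negative, so points
   arbitrarily close to pi(rho) lie outside U_N^*. *)

Lemma sum_symmetric_pairs (R : comPzRingType) (N : nat) (f : 'I_N -> 'I_N -> R) :
  (forall a b, f a b = f b a) ->
  \sum_a \sum_b f a b =
  \sum_a f a a + 2 * \sum_(ij : pairs N) f (val ij).1 (val ij).2.
Proof.
move=> fsym.
have split_row (a : 'I_N) : \sum_b f a b =
    f a a + (\sum_(b : 'I_N | (a < b)%N) f a b + \sum_(b : 'I_N | (b < a)%N) f a b).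
  rewrite (bigD1 a) //= (bigID (fun b : 'I_N => (a < b)%N)) /=; congr (_ + (_ + _)).
    by apply: eq_bigl => b; rewrite andb_idl // => ab; rewrite neq_ltn ab orbT.
  by apply: eq_bigl => b; rewrite -leqNgt -ltn_neqAle.
have lower_upper : \sum_(a : 'I_N) \sum_(b : 'I_N | (b < a)%N) f a b =
    \sum_(a : 'I_N) \sum_(b : 'I_N | (a < b)%N) f a b.
  rewrite (exchange_big_dep xpredT) //=.
  by apply: eq_bigr => b _; apply: eq_bigr => a _; rewrite fsym.
have upper_pairs : \sum_(a : 'I_N) \sum_(b : 'I_N | (a < b)%N) f a b =
    \sum_(ij : pairs N) f (val ij).1 (val ij).2.
  rewrite pair_big_dep /= (reindex_omap (val : pairs N -> _) insub) /=.
    by apply: eq_bigl => ij; rewrite (valP ij) valK eqxx.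
  by move=> ij ij_lt; rewrite insubT.
under eq_bigr do rewrite split_row.
by rewrite big_split big_split /= lower_upper upper_pairs mulrDl mul1r.
Qed.

Section CovarianceQuadraticForm.
Context {R : realType} {N : nat}.
Implicit Types (p : {ffun cube N -> R}) (lam : 'I_N -> R) (r : 'M[R]_N).

Definition lincomb lam (x : cube N) : R := \sum_k lam k * sgn (x k).

Definition qform lam r : R := \sum_a \sum_b lam a * lam b * r a b.

Lemma sgn_sqr (b : bool) : sgn b * sgn b = 1 :> R.
Proof. by case: b; rewrite /sgn ?mulrNN mulr1. Qed.

Lemma rho_of_sym p a b : rho_of p a b = rho_of p b a.
Proof. by rewrite !mxE; apply: eq_bigr => x _; rewrite (mulrC (sgn _)). Qed.

Lemma rho_of_diag p a : is_law p -> rho_of p a a = 1.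
Proof. by case=> _ p1; rewrite mxE -p1; apply: eq_bigr => x _; rewrite sgn_sqr mulr1. Qed.

Lemma qform_rho_of lam p :
  qform lam (rho_of p) = \sum_x p x * lincomb lam x ^+ 2.
Proof.
transitivity (\sum_a \sum_b \sum_x lam a * lam b * (p x * (sgn (x a) * sgn (x b)))).
  by apply: eq_bigr => a _; apply: eq_bigr => b _; rewrite mxE mulr_sumr.
rewrite exchange_big; under eq_bigr do rewrite exchange_big.
rewrite exchange_big; apply: eq_bigr => x _ /=.
rewrite expr2 /lincomb mulr_suml mulr_sumr; apply: eq_bigr => a _.
by rewrite !mulr_sumr; apply: eq_bigr => b _; ring.
Qed.

Lemma mulmx_rho_of lam p a :
  ((\row_k lam k) *m rho_of p) 0 a = \sum_x p x * sgn (x a) * lincomb lam x.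
Proof.
rewrite mxE; transitivity (\sum_b \sum_x p x * sgn (x a) * (lam b * sgn (x b))).
  by apply: eq_bigr => b _; rewrite !mxE mulr_sumr; apply: eq_bigr => x _; ring.
by rewrite exchange_big; apply: eq_bigr => x _; rewrite /lincomb mulr_sumr.
Qed.

Lemma qform_mulmx lam r :
  qform lam r = \sum_b ((\row_k lam k) *m r) 0 b * lam b.
Proof.
rewrite /qform exchange_big; apply: eq_bigr => b _.
by rewrite mxE mulr_suml; apply: eq_bigr => a _; rewrite mxE; ring.
Qed.

Section NonnegativeWeights.
Context {p : {ffun cube N -> R}}.
Hypothesis p_ge0 : forall x, 0 <= p x.

Lemma qform_rho_of_ge0 lam : 0 <= qform lam (rho_of p).
Proof. by rewrite qform_rho_of; apply: sumr_ge0 => x _; rewrite mulr_ge0 ?sqr_ge0. Qed.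

Lemma as_lin_relP lam : as_lin_rel p lam <-> qform lam (rho_of p) = 0.
Proof.
rewrite qform_rho_of; split => [lam_rel | /eqP].
  apply: big1 => x _; have [px0 | px_gt0] := eqVneq (p x) 0; first by rewrite px0 mul0r.
  by rewrite /lincomb lam_rel ?expr0n ?mulr0 // lt_def px_gt0 p_ge0.
rewrite psumr_eq0 => [/allP sum0 x px_gt0 | x _]; last by rewrite mulr_ge0 ?sqr_ge0.
move/implyP: (sum0 x (mem_index_enum x)) => /(_ isT).
by rewrite mulf_eq0 gt_eqF //= sqrf_eq0 => /eqP.
Qed.

Lemma det_rho_of_eq0P :
  \det (rho_of p) = 0 <->
  exists lam : 'I_N -> R, (exists k, lam k != 0) /\ as_lin_rel p lam.
Proof.
split => [/eqP/det0P [v v_neq0 v_ker] | [lam [[k lam_k] lam_rel]]].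
  have [k v_k] : exists k, v 0 k != 0.
    apply/existsP; apply: contraNT v_neq0 => /existsPn v_eq0.
    by apply/eqP/rowP => k; rewrite mxE; apply/eqP/negPn/v_eq0.
  exists (v 0); split; first by exists k.
  apply/as_lin_relP; rewrite qform_mulmx.
  have -> : \row_k v 0 k = v by apply/rowP => j; rewrite mxE.
  by rewrite v_ker; apply: big1 => b _; rewrite mxE mul0r.
apply/eqP/det0P; exists (\row_k lam k).
  by apply: contraNneq lam_k => /matrixP /(_ 0 k); rewrite !mxE => ->.
apply/rowP => a; rewrite mulmx_rho_of mxE; apply: big1 => x _.
have [px0 | px_gt0] := eqVneq (p x) 0; first by rewrite px0 !mul0r.
by rewrite /lincomb lam_rel ?mulr0 // lt_def px_gt0 p_ge0.
Qed.

End NonnegativeWeights.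

Lemma as_lin_rel_two_coefs p lam k : is_law p -> as_lin_rel p lam ->
  lam k != 0 -> exists ij : pairs N, lam (val ij).1 * lam (val ij).2 != 0.
Proof.
move=> [p_ge0 p1] lam_rel lam_k.
have [x px_gt0] : exists x, 0 < p x.
  apply/existsP; apply: contra_eqT p1 => /existsPn p_le0.
  rewrite big1 1?eq_sym ?oner_eq0 // => x _.
  by apply/eqP; rewrite eq_le p_ge0 andbT leNgt; apply: p_le0.
have [l lk lam_l] : exists2 l, l != k & lam l != 0.
  apply/exists_inP; apply: contra_eqT (lam_rel x px_gt0) => /exists_inPn lam0.
  rewrite (bigD1 k) //= big1 ?addr0 => [|l /lam0 /negPn /eqP ->]; last by rewrite mul0r.
  by rewrite mulf_eq0 (negbTE lam_k) /=; case: (x k); rewrite /sgn ?oppr_eq0 oner_eq0.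
have lam_kl : lam k * lam l != 0 by rewrite mulf_neq0.
case: (ltngtP k l) => [kl | lk' | /val_inj kl]; last by rewrite kl eqxx in lk.
  by exists (exist _ (k, l) kl).
by exists (exist _ (l, k) lk'); rewrite mulrC.
Qed.

Definition qform_star lam (q : Fstar R N) : R :=
  \sum_a lam a ^+ 2 + 2 * \sum_(ij : pairs N) lam (val ij).1 * lam (val ij).2 * q ij.

Lemma qform_piF lam r : (forall a b, r a b = r b a) -> (forall a, r a a = 1) ->
  qform lam r = qform_star lam (piF r).
Proof.
move=> r_sym r_diag; rewrite /qform sum_symmetric_pairs => [|a b]; last first.
  by rewrite r_sym (mulrC (lam a)).
by congr (_ + _); apply: eq_bigr => a _; rewrite r_diag mulr1 expr2.
Qed.

Lemma qform_rho_of_piF p lam : is_law p ->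
  qform lam (rho_of p) = qform_star lam (piF (rho_of p)).
Proof. by move=> p_law; apply: qform_piF => [a b | a]; rewrite (rho_of_sym, rho_of_diag). Qed.

Lemma qform_star_dfwith lam q (ij : pairs N) t :
  qform_star lam (dfwith q ij t) =
  qform_star lam q + 2 * (lam (val ij).1 * lam (val ij).2) * (t - q ij).
Proof.
have others : \sum_(kl | kl != ij) lam (val kl).1 * lam (val kl).2 * dfwith q ij t kl
    = \sum_(kl | kl != ij) lam (val kl).1 * lam (val kl).2 * q kl.
  by apply: eq_bigr => kl kl_ij; rewrite dfwithout // eq_sym.
rewrite /qform_star (bigD1 ij) // [in RHS](bigD1 ij) //= dfwithin others.
ring.
Qed.

Lemma Ustar_qform_star_ge0 lam q : Ustar q -> 0 <= qform_star lam q.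
Proof.
case=> _ [p [p_law ->] <-]; rewrite -qform_rho_of_piF //.
by apply: qform_rho_of_ge0; case: p_law.
Qed.

Lemma Ustar_not_interior lam q (ij : pairs N) :
  lam (val ij).1 * lam (val ij).2 != 0 -> qform_star lam q = 0 ->
  ~ interior (@Ustar R N) q.
Proof.
set c := _ * _ => c_neq0 q0 q_int.
have dfwith_qij : dfwith q ij (q ij) = q.
  by apply: functional_extensionality_dep => kl; case: dfwithP.
have : nbhs (q ij) (dfwith q ij @^-1` @Ustar R N).
  by apply: (@dfwith_continuous _ (fun=> RT R)); rewrite dfwith_qij.
move=> /nbhs_ballP [e /= e_gt0 ball_Ustar].
pose d := e / 2 * Num.sg c.
have /(Ustar_qform_star_ge0 lam) : @Ustar R N (dfwith q ij (q ij - d)).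
  apply: ball_Ustar; rewrite /ball /= opprB addrC subrK /d normrM normr_sg c_neq0.
  by rewrite mulr1 ger0_norm ?divr_ge0 ?ltW // ltr_pdivrMr // ltr_pMr // ltr1n.
rewrite qform_star_dfwith q0 -/c.
have -> : 2 * c * (q ij - d - q ij) = - (e * `|c|) by rewrite /d normrEsg; field.
have : 0 < e * `|c| by rewrite mulr_gt0 // normr_gt0.
lra.
Qed.

End CovarianceQuadraticForm.

Theorem theorem3 (R : realType) (N : nat) (hN : (1 <= N)%N)
  (p : {ffun cube N -> R}) (hp : is_law p) :
  (\det (rho_of p) = 0 <->
     exists lam : 'I_N -> R, (exists k, lam k != 0) /\ as_lin_rel p lam)
  /\ (\det (rho_of p) = 0 -> boundary (@Ustar R N) (piF (rho_of p))).
Proof.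
have singularP := det_rho_of_eq0P hp.1.
split=> // /singularP [lam [[k lam_k] lam_rel]].
have [ij lam_ij] := as_lin_rel_two_coefs _ _ _ hp lam_rel lam_k.
split; first by apply: subset_closure; exists (rho_of p) => //; exists p.
apply: Ustar_not_interior lam_ij _.
by rewrite -qform_rho_of_piF //; apply/(as_lin_relP hp.1).
Qed.
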